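(* Let $n\ge 3$, let $a_0,\ldots,a_{n-1}$ be indeterminates over $\mathbb{Q}$, $f=x^n+a_{n-1}x^{n-1}+\cdots+a_0$, and \[f_1(x,y)=\frac{f(y)-f(x)}{y-x},\qquad f_3(x,y)=\frac{f(y)-2f\left(\frac{x+y}{2}\right)+f(x)}{\frac{(y-x)^2}{2}}.\] Let $g_1(x,y)=f_1(x-y,x+y)$, $g_3(x,y)=f_3(x-y,x+y)$ and $G=\operatorname{res}(g_1,g_3,y)$. For each integer $m$ put $\varphi_m(x)=f^{(m)}(x)/m!$ if $1\le m\le n$ and $\varphi_m=0$ if $m\le0$ or $m>n$; let $M$ be the infinite matrix with entries $M_{2s-1,l}=\varphi_{2(l-s)+2}$, $M_{2s,l}=\varphi_{2(l-s)+1}$ ($s,l\ge1$) and $H$ its $(n-2)$th leading principal minor. Then $G=H^2$.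
   Context: $f^{(m)}$ is the $m$th derivative of $f$ with respect to $x$; $\operatorname{res}(\cdot,\cdot,y)$ is the Sylvester resultant with respect to $y$. *)

(* Polynomials over A := Q[a_0,...,a_{n-1}] = {mpoly rat[n]}. *)
From HB Require Import structures.
From mathcomp Require Import all_boot all_order all_algebra.
From mathcomp Require Import mpoly.
Set Implicit Arguments. Unset Strict Implicit. Unset Printing Implicit Defensive.
Import Order.TTheory GRing.Theory Num.Theory.
Local Open Scope ring_scope.

Section Defs.
Variable n : nat.
Local Notation A := {mpoly rat[n]}.

(* bivariate polynomials in x,y: {poly {poly A}}, outer variable y, inner x *)
Definition cc (c : A) : {poly {poly A}} := c%:P%:P.
Definition xB : {poly {poly A}} := ('X : {poly A})%:P.
Definition yB : {poly {poly A}} := 'X.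
Definition halfB : {poly {poly A}} := cc ((2%:R^-1 : rat)%:MP).

Definition fgen : {poly A} := 'X^n + \sum_(i < n) ('X_i)%:P * 'X^i.

Definition evalB (p : {poly A}) (u : {poly {poly A}}) := (map_poly cc p).[u].

Definition subst2 (h u v : {poly {poly A}}) : {poly {poly A}} :=
  (map_poly (fun q : {poly A} => evalB q u) h).[v].

(* f_1(x,y) = (f(y) - f(x)) / (y - x)  (exact division by the monic y - x) *)
Definition f1 : {poly {poly A}} :=
  (evalB fgen yB - evalB fgen xB) %/ (yB - xB).

(* f_3(x,y) = (f(y) - 2 f((x+y)/2) + f(x)) / ((y-x)^2/2)
            = 2 (f(y) - 2 f((x+y)/2) + f(x)) / (y-x)^2 (exact division, monic divisor) *)
Definition f3 : {poly {poly A}} :=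
  (2%:R * (evalB fgen yB - 2%:R * evalB fgen (halfB * (xB + yB)) + evalB fgen xB))
    %/ (yB - xB) ^+ 2.

Definition g1 : {poly {poly A}} := subst2 f1 (xB - yB) (xB + yB).
Definition g3 : {poly {poly A}} := subst2 f3 (xB - yB) (xB + yB).

Definition Gres : {poly A} := resultant g1 g3.

(* phi_m = f^(m)/m! for 1 <= m <= n, and 0 otherwise *)
Definition phi (m : int) : {poly A} :=
  if (1 <= m)%R && (m <= n%:Z)%R then fgen^`N(`|m|%N) else 0.

(* the infinite matrix M, 1-indexed: M_{2s-1,l} = phi_{2(l-s)+2}, M_{2s,l} = phi_{2(l-s)+1} *)
Definition Mentry (r l : nat) : {poly A} :=
  if odd r then phi (2%:Z * (l%:Z - (r.+1./2)%:Z) + 2)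
  else phi (2%:Z * (l%:Z - (r./2)%:Z) + 1).

Definition Hminor : {poly A} :=
  \det (\matrix_(i < n - 2, j < n - 2) Mentry i.+1 j.+1).

End Defs.

(* Write f(x + t) = \sum_k phi_k(x) t^k = E(t^2) + t P(t^2), so that P and
   Q := (E - phi_0) / t have coefficients phi_1, phi_3, ... and phi_2, phi_4, ....
   The substitution x := x - y, y := x + y turns the two difference quotients into
   even functions of y: g1 = P(y^2) and g3 = Q(y^2). The Sylvester matrix of
   P(y^2), Q(y^2) splits by parity into two copies of that of P, Q, hence
   G = res(P, Q)^2. Finally the leading (n-2)-minor of M is a row permutation of
   the Sylvester matrix of P and Q, so H^2 = res(P, Q)^2 as well. *)

From HB Require Import structures.
From mathcomp Require Import all_boot all_order all_algebra all_fingroup.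
From mathcomp Require Import mpoly zify ring.
Set Implicit Arguments. Unset Strict Implicit. Unset Printing Implicit Defensive.
Import Order.TTheory GRing.Theory Num.Theory.
Local Open Scope ring_scope.

Lemma perm_of_nat_inj N (f : nat -> nat) :
    (forall i, (i < N)%N -> (f i < N)%N) ->
    {in gtn N &, injective f} ->
  {s : 'S_N | forall i : 'I_N, val (s i) = f i}.
Proof.
move=> fN f_inj.
pose g (i : 'I_N) : 'I_N := Ordinal (fN i (ltn_ord i)).
have g_inj : injective g.
  move=> i j /(congr1 val) /= /f_inj eq_ij; apply/val_inj/eq_ij; exact: ltn_ord.
by exists (perm g_inj) => i; rewrite permE.
Qed.

Section DetReindex.
Variables (R : comNzRingType) (N : nat) (f : nat -> nat).
Hypotheses (fN : forall i, (i < N)%N -> (f i < N)%N) (f_inj : {in gtn N &, injective f}).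

Lemma det_reindex_rows_sqr (A B : nat -> nat -> R) :
    (forall i j, (i < N)%N -> (j < N)%N -> A i j = B (f i) j) ->
  \det (\matrix_(i < N, j < N) A i j) ^+ 2 = \det (\matrix_(i < N, j < N) B i j) ^+ 2.
Proof.
move=> eqAB; have [s sE] := perm_of_nat_inj fN f_inj.
have -> : \matrix_(i < N, j < N) A i j = row_perm s (\matrix_(i < N, j < N) B i j).
  by apply/matrixP => i j; rewrite !mxE sE eqAB.
by rewrite row_permE det_mulmx det_perm exprMn sqrr_sign mul1r.
Qed.

Lemma det_reindex (A B : nat -> nat -> R) :
    (forall i j, (i < N)%N -> (j < N)%N -> A i j = B (f i) (f j)) ->
  \det (\matrix_(i < N, j < N) A i j) = \det (\matrix_(i < N, j < N) B i j).
Proof.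
move=> eqAB; have [s sE] := perm_of_nat_inj fN f_inj.
have -> : \matrix_(i < N, j < N) A i j =
    row_perm s (col_perm s (\matrix_(i < N, j < N) B i j)).
  by apply/matrixP => i j; rewrite !mxE !sE eqAB.
rewrite row_permE col_permE !det_mulmx !det_perm odd_permV.
by rewrite mulrCA -expr2 sqrr_sign mulr1.
Qed.

End DetReindex.

Lemma det_parity_interleave (R : comNzRingType) N (S : nat -> nat -> R) :
  \det (\matrix_(i < N + N, j < N + N) (if odd i == odd j then S i./2 j./2 else 0)) =
  \det (\matrix_(i < N, j < N) S i j) ^+ 2.
Proof.
pose B k l := if (k < N)%N && (l < N)%N then S k l
  else if (N <= k)%N && (N <= l)%N then S (k - N)%N (l - N)%N else 0.
pose f i := if odd i then (N + i./2)%N else i./2.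
(* Listing the even indices before the odd ones makes the matrix block diagonal. *)
rewrite (@det_reindex _ (N + N) f _ _
  (fun i j => if odd i == odd j then S i./2 j./2 else 0) B).
- set SN := \matrix_(i < N, j < N) S i j.
  have -> : \matrix_(i < N + N, j < N + N) B i j = block_mx SN 0 0 SN.
    apply/matrixP => k l; rewrite -(splitK k) -(splitK l).
    case: (split k) => a; case: (split l) => b;
      rewrite ?block_mxEul ?block_mxEur ?block_mxEdl ?block_mxEdr !mxE /B /=.
    + by rewrite !ltn_ord.
    + by rewrite ltn_ord /= ltnNge leq_addr /= leqNgt ltn_ord.
    + by rewrite ltnNge leq_addr /= leqNgt ltn_ord.
    + by rewrite ltnNge leq_addr /= !leq_addr /= !addKn.
  by rewrite det_lblock expr2.
- by move=> i lt_iN; rewrite /f; case: ifP => _; lia.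
- by move=> i j; rewrite !inE /f; case: ifP => oi; case: ifP => oj; lia.
- move=> i j lt_i lt_j; rewrite /f /B.
  case oi: (odd i); case oj: (odd j) => /=.
  + by rewrite ifN ?leq_addr ?addKn //; lia.
  + by rewrite ifN ?ifN //; lia.
  + by rewrite ifN ?ifN //; lia.
  + by rewrite ifT //; lia.
Qed.

Definition sylvester_coef (R : nzRingType) (p q : {poly R}) (i j : nat) : R :=
  if (i < (size q).-1)%N then p`_(j - i) *+ (i <= j)%N
  else q`_(j - (i - (size q).-1)) *+ (i - (size q).-1 <= j)%N.

Lemma resultant_det_nat (R : nzRingType) (p q : {poly R}) N :
    ((size q).-1 + (size p).-1)%N = N ->
  resultant p q = \det (\matrix_(i < N, j < N) sylvester_coef p q i j).
Proof.
move=> eN; case: N / eN; congr (\det _); apply/matrixP => i j.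
by rewrite Sylvester_mxE mxE /sylvester_coef; case: splitP => k -> //=; rewrite addKn.
Qed.

Lemma band_coef_comp_X2 (R : comNzRingType) (r : {poly R}) k j :
  (r \Po 'X^2)`_(j - k) *+ (k <= j)%N =
  if odd k == odd j then r`_(j./2 - k./2) *+ (k./2 <= j./2)%N else 0.
Proof.
rewrite coef_comp_poly_Xn // dvdn2.
case: (leqP k j) => [le_kj | lt_jk]; last first.
  rewrite mulr0n; case: eqP => // par_kj.
  by rewrite (_ : (k./2 <= j./2)%N = false) ?mulr0n //; lia.
have -> : ~~ odd (j - k) = (odd k == odd j) by lia.
case: eqP => [par_kj | _]; last exact: mul0rn.
by rewrite (_ : (k./2 <= j./2)%N = true); [congr (_`_ _ *+ _); lia | lia].
Qed.

Lemma resultant_comp_X2 (R : idomainType) (p q : {poly R}) :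
  resultant (p \Po 'X^2) (q \Po 'X^2) = resultant p q ^+ 2.
Proof.
have size_X2 : size ('X^2 : {poly R}) = 3%N by rewrite size_polyXn.
set kq := (size q).-1; set kp := (size p).-1.
rewrite (@resultant_det_nat _ p q (kq + kp)) //.
rewrite (@resultant_det_nat _ _ _ (kq + kp + (kq + kp))); last first.
  by rewrite !size_comp_poly size_X2 -/kq -/kp; lia.
rewrite -det_parity_interleave; congr (\det _); apply/matrixP => i j; rewrite !mxE.
rewrite /sylvester_coef size_comp_poly size_X2 -/kq.
have -> : (i < kq * 2)%N = (i./2 < kq)%N by lia.
case: ifP => lt_i_kq; rewrite band_coef_comp_X2; first by case: eqP; rewrite ?lt_i_kq.
have [-> ->] : odd (i - kq * 2) = odd i /\ (i - kq * 2)./2 = (i./2 - kq)%N by lia.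
by case: eqP; rewrite ?lt_i_kq.
Qed.

Lemma comp_poly_sub_coef0 (R : comNzRingType) (r w : {poly R}) :
  r \Po w - (r`_0)%:P = (drop_poly 1 r \Po w) * w.
Proof.
have take1 : take_poly 1 r = (r`_0)%:P.
  by apply/polyP => -[|k]; rewrite coef_take_poly coefC.
rewrite -{1}[r](poly_take_drop 1) take1 expr1.
by rewrite comp_polyD comp_polyC comp_polyM comp_polyX addrC addKr.
Qed.

Lemma comp_poly_second_difference (R : comNzRingType) (r h w : {poly R}) :
    h * 2%:R = 1 ->
  r \Po w - 2%:R * (r \Po (h * w)) + (r`_0)%:P =
  (drop_poly 2 r \Po w - 2%:R * h ^+ 2 * (drop_poly 2 r \Po (h * w))) * w ^+ 2.
Proof.
move=> h2.
have take2 : take_poly 2 r = (r`_0)%:P + (r`_1)%:P * 'X.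
  apply/polyP => k; rewrite coef_take_poly coefD coefC coefCM coefX.
  by case: k => [|[|k]] /=; rewrite ?mulr1 ?mulr0 ?addr0 ?add0r.
have r_split u : r \Po u = (r`_0)%:P + (r`_1)%:P * u + (drop_poly 2 r \Po u) * u ^+ 2.
  rewrite -{1}[r](poly_take_drop 2) take2.
  by rewrite !comp_polyD !comp_polyM !comp_polyC comp_polyX expr2.
have expand a b c e :
    a + b * w + c * w ^+ 2 - 2%:R * (a + b * (h * w) + e * (h * w) ^+ 2) + a =
    (c - 2%:R * h ^+ 2 * e) * w ^+ 2 + b * w * (1 - h * 2%:R) by ring.
by rewrite !r_split expand h2 subrr mulr0 addr0.
Qed.

Lemma comp_poly_oppX (R : comNzRingType) (r : {poly R}) :
  r \Po - 'X = even_poly r \Po 'X^2 - (odd_poly r \Po 'X^2) * 'X.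
Proof.
rewrite -{1}[r]poly_even_odd comp_polyD comp_polyM comp_polyX.
by rewrite -!comp_polyA comp_Xn_poly sqrrN mulrN.
Qed.

Lemma comp_poly_odd_part (R : comNzRingType) (r : {poly R}) :
  r - (r \Po - 'X) = (odd_poly r \Po 'X^2) * ('X *+ 2).
Proof.
rewrite comp_poly_oppX -{1}[r]poly_even_odd.
by move: (even_poly r \Po _) (odd_poly r \Po _) => e o; ring.
Qed.

Lemma comp_poly_even_part (R : comNzRingType) (r : {poly R}) :
  r + (r \Po - 'X) = (even_poly r \Po 'X^2) *+ 2.
Proof.
rewrite comp_poly_oppX -{1}[r]poly_even_odd.
by move: (even_poly r \Po _) (odd_poly r \Po _) => e o; ring.
Qed.

Lemma size_from_coef (R : nzRingType) (r : {poly R}) k :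
  r`_k != 0 -> (forall i, (k < i)%N -> r`_i = 0) -> size r = k.+1.
Proof.
move=> nz_k vanish; apply/anti_leq/andP; split; first exact/leq_sizeP.
by rewrite ltnNge; apply: contra nz_k => /leq_sizeP/(_ k (leqnn k))/eqP.
Qed.

Section GenericPolynomial.
Variable n : nat.
Local Notation A := {mpoly rat[n]}.
Local Notation B := {poly {poly A}}.
Local Notation cc := (@cc n).
Local Notation xB := (@xB n).
Local Notation yB := (@yB n).
Local Notation evalB := (@evalB n).

Definition cc_rmorph : {rmorphism A -> B} := @polyC {poly A} \o @polyC A.
Definition evalB_rmorph (u : B) : {rmorphism {poly A} -> B} :=
  horner_eval u \o map_poly cc_rmorph.
Definition subst_xy (u v : B) : {rmorphism B -> B} :=
  horner_eval v \o map_poly (evalB_rmorph u).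

Lemma subst_xyE u v h : subst_xy u v h = (map_poly (evalB_rmorph u) h).[v].
Proof. by []. Qed.

Lemma evalBE p u : evalB p u = (map_poly cc_rmorph p).[u].
Proof. by []. Qed.

Lemma evalB_rmorphE u p : evalB_rmorph u p = evalB p u.
Proof. by []. Qed.

Lemma natrB_neq0 k : (0 < k)%N -> (k%:R : B) != 0.
Proof.
move=> k_gt0; rewrite -(rmorph_nat cc_rmorph) /= !polyC_eq0.
by rewrite -(rmorph_nat (@mpolyC n rat)) mpolyC_eq0 pnatr_eq0 -lt0n.
Qed.

Lemma halfB_mul2 : halfB n * 2%:R = 1.
Proof.
have -> : (2%:R : B) = cc_rmorph 2%:R by rewrite rmorph_nat.
rewrite -[halfB n]/(cc_rmorph (2%:R^-1)%:MP) -rmorphM.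
have -> : (2%:R^-1 : rat)%:MP * 2%:R = 1 :> A.
  have -> : (2%:R : A) = (2%:R : rat)%:MP by rewrite rmorph_nat.
  by rewrite -rmorphM mulVf.
exact: rmorph1.
Qed.

Lemma evalB_X u : evalB 'X u = u.
Proof. by rewrite evalBE map_polyX hornerX. Qed.

Lemma evalB_C u c : evalB c%:P u = cc c.
Proof. by rewrite evalBE map_polyC hornerC. Qed.

Lemma evalB_x (q : {poly A}) : evalB q xB = q%:P.
Proof.
rewrite -evalB_rmorphE.
elim/poly_ind: q => [|q c IHq]; first by rewrite !rmorph0.
by rewrite !rmorphD !rmorphM IHq !evalB_rmorphE evalB_X evalB_C.
Qed.

Definition taylor (p : {poly A}) : B := \poly_(i < size p) p^`N(i).

Lemma coef_taylor p i : (taylor p)`_i = p^`N(i).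
Proof. by rewrite coef_poly; case: ltnP => // /nderivn_poly0. Qed.

Lemma taylor_coef0 p : (taylor p)`_0 = p.
Proof. by rewrite coef_taylor nderivn0. Qed.

Lemma evalB_taylor p w : evalB p (xB + w) = taylor p \Po w.
Proof.
have -> : taylor p \Po w = \sum_(i < size p) (p^`N(i))%:P * w ^+ i.
  rewrite /taylor poly_def linear_sum; apply: eq_bigr => i _.
  by rewrite /= comp_polyZ comp_Xn_poly mul_polyC.
rewrite evalBE (nderiv_taylor_wide (n := size p) (mulrC _ _)); last first.
  have cc_inj : injective cc_rmorph := inj_comp (@polyC_inj _) (@polyC_inj _).
  by rewrite (size_map_inj_poly cc_inj (rmorph0 _)).
by apply: eq_bigr => i _; rewrite (nderivn_map cc_rmorph) -evalB_x.
Qed.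

Lemma subst_xy_x u v : subst_xy u v xB = u.
Proof. by rewrite subst_xyE /xB map_polyC hornerC; apply: evalB_X. Qed.

Lemma subst_xy_y u v : subst_xy u v yB = v.
Proof. by rewrite subst_xyE /yB map_polyX hornerX. Qed.

Lemma subst_xy_cc u v c : subst_xy u v (cc c) = cc c.
Proof. by rewrite subst_xyE /cc map_polyC hornerC; apply: evalB_C. Qed.

Lemma subst_xy_evalB u v p w : subst_xy u v (evalB p w) = evalB p (subst_xy u v w).
Proof.
rewrite evalBE -horner_map -map_poly_comp.
by congr (_.[_]); apply: eq_map_poly => c /=; apply: subst_xy_cc.
Qed.

Local Notation f := (fgen n).
Local Notation T := (taylor f).

Lemma evalB_fgen_x : evalB f xB = (T`_0)%:P.
Proof. by rewrite evalB_x taylor_coef0. Qed.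

Lemma evalB_fgen_y : evalB f yB = T \Po (yB - xB).
Proof. by rewrite -evalB_taylor addrC subrK. Qed.

Lemma f1_mul : f1 n * (yB - xB) = evalB f yB - evalB f xB.
Proof.
rewrite /f1 evalB_fgen_y evalB_fgen_x comp_poly_sub_coef0.
by rewrite Pdiv.IdomainMonic.mulpK // monicXsubC.
Qed.

Lemma f3_mul : f3 n * (yB - xB) ^+ 2 =
  2%:R * (evalB f yB - 2%:R * evalB f (halfB n * (xB + yB)) + evalB f xB).
Proof.
have fmid : evalB f (halfB n * (xB + yB)) = T \Po (halfB n * (yB - xB)).
  rewrite -evalB_taylor; congr (evalB _ _); apply/eqP; rewrite -subr_eq0.
  have expand (h x y : B) : h * (x + y) - (x + h * (y - x)) = x * (h * 2%:R - 1).
    by ring.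
  by rewrite expand halfB_mul2 subrr mulr0.
rewrite /f3 evalB_fgen_y fmid evalB_fgen_x.
rewrite comp_poly_second_difference ?halfB_mul2 // [X in X %/ _]mulrA.
rewrite Pdiv.IdomainMonic.mulpK; first exact/esym/mulrA.
by apply: monic_exp; apply: monicXsubC.
Qed.

Lemma X_double_neq0 : ('X *+ 2 : B) != 0.
Proof. by rewrite -mulr_natr mulf_neq0 ?polyX_eq0 ?natrB_neq0. Qed.

Lemma g1E : g1 n = odd_poly T \Po 'X^2.
Proof.
have := congr1 (subst_xy (xB - yB) (xB + yB)) f1_mul.
rewrite rmorphM !rmorphB !subst_xy_evalB subst_xy_x subst_xy_y.
rewrite -[subst_xy _ _ (f1 n)]/(g1 n).
rewrite !evalB_taylor /yB comp_polyXr comp_poly_odd_part.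
have -> : xB + 'X - (xB - 'X) = 'X *+ 2 :> B by ring.
exact/mulIf/X_double_neq0.
Qed.

Lemma subst_xy_halfB u v : subst_xy u v (halfB n) = halfB n.
Proof. exact: subst_xy_cc. Qed.

Lemma halfB_mid : halfB n * (xB - yB + (xB + yB)) = xB.
Proof.
apply/eqP; rewrite -subr_eq0.
have expand (h x y : B) : h * (x - y + (x + y)) - x = x * (h * 2%:R - 1) by ring.
by rewrite expand halfB_mul2 subrr mulr0.
Qed.

Lemma g3E : g3 n = drop_poly 1 (even_poly T) \Po 'X^2.
Proof.
have := congr1 (subst_xy (xB - yB) (xB + yB)) f3_mul.
rewrite rmorphM rmorphXn rmorphB rmorphM rmorph_nat rmorphD rmorphB rmorphM rmorph_nat.
rewrite !subst_xy_evalB rmorphM rmorphD subst_xy_halfB -[subst_xy _ _ (f3 n)]/(g3 n).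
rewrite !subst_xy_x !subst_xy_y halfB_mid evalB_fgen_x !evalB_taylor /yB comp_polyXr.
have even_split :
    even_poly T \Po 'X^2 = (drop_poly 1 (even_poly T) \Po 'X^2) * 'X^2 + (T`_0)%:P.
  by rewrite -comp_poly_sub_coef0 coef_even_poly subrK.
have regroup (t c s : B) : t - 2%:R * c + s = (t + s) - 2%:R * c by ring.
rewrite regroup comp_poly_even_part even_split.
have -> : xB + 'X - (xB - 'X) = 'X *+ 2 :> B by ring.
have expand (q c : B) :
  2%:R * ((q * 'X^2 + c) *+ 2 - 2%:R * c) = q * ('X *+ 2) ^+ 2 by ring.
by rewrite expand; apply/mulIf/expf_neq0/X_double_neq0.
Qed.

Lemma coef_fgen_ge k : (n <= k)%N -> f`_k = (k == n)%:R.
Proof.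
move=> le_nk; rewrite /fgen coefD coefXn coef_sum big1 ?addr0 // => i _.
by rewrite coefCM coefXn gtn_eqF ?mulr0 // (leq_trans (ltn_ord i)).
Qed.

Lemma size_fgen : size f = n.+1.
Proof.
apply/anti_leq/andP; split.
  by apply/leq_sizeP => k lt_nk; rewrite coef_fgen_ge ?gtn_eqF // ltnW.
rewrite ltnNge; apply/negP => /leq_sizeP/(_ n (leqnn n)).
by rewrite coef_fgen_ge // eqxx; apply/eqP/oner_neq0.
Qed.

Lemma nderivn_fgen_eq0 k : (n < k)%N -> f^`N(k) = 0.
Proof. by move=> lt_nk; apply: nderivn_poly0; rewrite size_fgen. Qed.

Lemma nderivn_fgen_neq0 k : (k <= n)%N -> f^`N(k) != 0.
Proof.
move=> le_kn; apply/eqP => /(congr1 (fun p : {poly A} => p`_(n - k))).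
rewrite coef_nderivn coef0 subnKC // coef_fgen_ge // eqxx => /eqP.
rewrite -(rmorph_nat (@mpolyC n rat)) mpolyC_eq0 pnatr_eq0 => /eqP.
by have := bin_gt0 n k; rewrite le_kn; lia.
Qed.

Local Notation P := (odd_poly T).
Local Notation Q := (drop_poly 1 (even_poly T)).

Lemma coef_taylor_odd i : P`_i = f^`N(i.*2.+1).
Proof. by rewrite coef_odd_poly coef_taylor. Qed.

Lemma coef_taylor_even i : Q`_i = f^`N(i.*2.+2).
Proof. by rewrite coef_drop_poly coef_even_poly coef_taylor addn1. Qed.

Hypothesis n_ge2 : (2 <= n)%N.

Lemma size_taylor_odd : size P = ((n - 1)./2).+1.
Proof.
apply: size_from_coef => [|i lt_i]; rewrite coef_taylor_odd.
  by rewrite nderivn_fgen_neq0 //; lia.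
by rewrite nderivn_fgen_eq0 //; lia.
Qed.

Lemma size_taylor_even : size Q = ((n - 2)./2).+1.
Proof.
apply: size_from_coef => [|i lt_i]; rewrite coef_taylor_even.
  by rewrite nderivn_fgen_neq0 //; lia.
by rewrite nderivn_fgen_eq0 //; lia.
Qed.

Lemma phi_nat (m : int) k : m = k%:Z -> (0 < k)%N -> phi n m = f^`N(k).
Proof.
move=> -> k_gt0; rewrite /phi; case: ifP => // out_range.
by rewrite nderivn_fgen_eq0 //; move/negbT: out_range; rewrite negb_and; lia.
Qed.

Lemma phi_le0 (m : int) : (m <= 0)%R -> phi n m = 0.
Proof. by move=> m_le0; rewrite /phi; case: ifP => // /andP [m_ge1 _]; lia. Qed.

Definition sylvester_row i := if odd i then i./2 else ((n - 2)./2 + i./2)%N.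

Lemma Mentry_sylvester i j : (i < n - 2)%N -> (j < n - 2)%N ->
  Mentry n i.+1 j.+1 = sylvester_coef P Q (sylvester_row i) j.
Proof.
move=> lt_i lt_j; rewrite /Mentry /sylvester_coef size_taylor_even /sylvester_row /=.
case odd_i: (odd i) => /=.
- rewrite ifT; last by lia.
  case: (leqP i./2 j) => le_ij; last by rewrite mulr0n; apply: phi_le0; lia.
  by rewrite mulr1n coef_taylor_odd; apply: phi_nat; lia.
- rewrite ifF ?addKn; last by lia.
  case: (leqP i./2 j) => le_ij; last by rewrite mulr0n; apply: phi_le0; lia.
  by rewrite mulr1n coef_taylor_even; apply: phi_nat; lia.
Qed.

Lemma Hminor_sqr : Hminor n ^+ 2 = resultant P Q ^+ 2.
Proof.
rewrite (@resultant_det_nat _ P Q (n - 2)); last first.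
  by rewrite size_taylor_odd size_taylor_even /=; lia.
apply: (@det_reindex_rows_sqr _ _ sylvester_row _ _ (fun i j => Mentry n i.+1 j.+1)).
- by move=> i lt_i; rewrite /sylvester_row; case: ifP => _; lia.
- move=> i j; rewrite !inE /sylvester_row.
  by case: ifP => odd_i; case: ifP => odd_j; lia.
- exact: Mentry_sylvester.
Qed.

End GenericPolynomial.

Theorem lemma6 (n : nat) (hn : (3 <= n)%N) : Gres n = (Hminor n) ^+ 2.
Proof.
by rewrite /Gres g1E g3E resultant_comp_X2 Hminor_sqr //; apply: ltnW.
Qed.
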